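(* Let $P\subseteq\mathrm{Act}^\omega$ and let $L_a,L_r\subseteq\mathrm{Act}^*$ be sets of finite traces (the traces accepted, resp. rejected, by some monitor) such that: (1) verdicts are irrevocable: $L_a$ and $L_r$ are closed under finite extensions ($s\in L_a$ implies $ss'\in L_a$ for all $s'\in\mathrm{Act}^*$, and likewise for $L_r$); (2) soundness: for every $t\in\mathrm{Act}^\omega$, if some finite prefix of $t$ is in $L_r$ then $t\notin P$, and if some finite prefix of $t$ is in $L_a$ then $t\in P$; (3) completeness: every $t\in P$ has a finite prefix in $L_a$ and every $t\in\mathrm{Act}^\omega\setminus P$ has a finite prefix in $L_r$. Then there is a closed recursion-free formula $\varphi$ (built only from $\mathrm{tt},\mathrm{ff},\wedge,\vee,[A],\langle A\rangle$) with $[\![\varphi]\!]_L=P$.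
   Context: $\mathrm{Act}$ is a finite set of actions. Linear-time semantics over $\mathrm{Act}^\omega$ for recursion-free formulae $\varphi::=\mathrm{tt}\mid\mathrm{ff}\mid\varphi\vee\varphi\mid\varphi\wedge\varphi\mid\langle A\rangle\varphi\mid[A]\varphi$ ($A\subseteq\mathrm{Act}$): $[\![\mathrm{tt}]\!]_L=\mathrm{Act}^\omega$, $[\![\mathrm{ff}]\!]_L=\emptyset$, $\vee,\wedge$ union/intersection, $[\![\langle A\rangle\varphi]\!]_L=\{at\mid a\in A,t\in[\![\varphi]\!]_L\}$, $[\![[A]\varphi]\!]_L=\{t\mid\forall a\in A,\forall t'.\ t=at'\Rightarrow t'\in[\![\varphi]\!]_L\}$. *)

From mathcomp Require Import all_boot.
Set Implicit Arguments. Unset Strict Implicit. Unset Printing Implicit Defensive.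

Definition itrace (Act : Type) := nat -> Act.

Definition itail (Act : Type) (t : itrace Act) : itrace Act := fun i => t i.+1.

Definition iprefix (Act : Type) (t : itrace Act) (n : nat) : seq Act :=
  [seq t i | i <- iota 0 n].

Inductive rform (Act : finType) : Type :=
| RTt : rform Act
| RFf : rform Act
| ROr : rform Act -> rform Act -> rform Act
| RAnd : rform Act -> rform Act -> rform Act
| RDia : {set Act} -> rform Act -> rform Act
| RBox : {set Act} -> rform Act -> rform Act.

Fixpoint lsem (Act : finType) (phi : rform Act) (t : itrace Act) : Prop :=
  match phi with
  | RTt => True
  | RFf => False
  | ROr p q => lsem p t \/ lsem q t
  | RAnd p q => lsem p t /\ lsem q t
  | RDia A p => t 0 \in A /\ lsem p (itail t)
  | RBox A p => t 0 \in A -> lsem p (itail t)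
  end.

(* Since verdicts are irrevocable and every infinite trace eventually gets one,
   König's lemma over the finite alphabet gives a uniform depth N by which every
   trace has a verdict.  Membership in P is then decided by the length-N prefix
   alone (via soundness), and any property of length-N prefixes is expressed by
   a recursion-free formula of modal depth N branching on each action. *)
From Stdlib Require Import Classical ClassicalEpsilon.
From mathcomp Require Import all_boot.

Set Implicit Arguments. Unset Strict Implicit. Unset Printing Implicit Defensive.

Lemma iprefixS (Act : Type) (t : itrace Act) n :
  iprefix t n.+1 = rcons (iprefix t n) (t n).
Proof. by rewrite /iprefix -addn1 iotaD add0n /= map_cat cats1. Qed.

Lemma iprefixS_itail (Act : Type) (t : itrace Act) n :
  iprefix t n.+1 = t 0 :: iprefix (itail t) n.
Proof.
rewrite /iprefix /= -(addn0 1) iotaDl -map_comp.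
by congr (_ :: _); apply: eq_map => i /=; rewrite /itail add1n.
Qed.

Lemma size_iprefix (Act : Type) (t : itrace Act) n : size (iprefix t n) = n.
Proof. by rewrite /iprefix size_map size_iota. Qed.

Section PrefixDefinable.
Variable Act : finType.

Lemma lsem_foldr_and (I : eqType) (f : I -> rform Act) (l : seq I) t :
  lsem (foldr (fun i => RAnd (f i)) (RTt Act) l) t <->
  (forall i, i \in l -> lsem (f i) t).
Proof.
elim: l => [|j l IHl] /=; first by split.
rewrite IHl; split=> [[fj fl] i|fl]; last by split=> [|i li]; apply: fl;
  rewrite inE ?eqxx ?li ?orbT.
by rewrite inE => /orP [/eqP ->|/fl].
Qed.

Fixpoint prefix_form (n : nat) (Q : seq Act -> Prop) : rform Act :=
  if n is n'.+1 then
    foldr (fun a => RAnd (RBox [set a] (prefix_form n' (fun w => Q (a :: w)))))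
      (RTt Act) (enum Act)
  else if excluded_middle_informative (Q [::]) then RTt Act else RFf Act.

Lemma lsem_prefix_form n Q t : lsem (prefix_form n Q) t <-> Q (iprefix t n).
Proof.
elim: n Q t => [|n IHn] Q t /=.
  by case: excluded_middle_informative.
rewrite lsem_foldr_and iprefixS_itail; split=> [all_a|Qt a _ /set1P t0a].
  by apply/(IHn (fun w => Q (t 0 :: w)))/all_a; rewrite ?mem_enum ?inE.
by apply/(IHn (fun w => Q (a :: w))); rewrite -t0a.
Qed.

End PrefixDefinable.

Section FanTheorem.
Variables (Act : finType) (D : seq Act -> Prop).
Hypothesis D_ext : forall s s', D s -> D (s ++ s').

Definition barred_at (s : seq Act) (m : nat) :=
  forall s', size s' = m -> D (s ++ s').

Definition barred (s : seq Act) := exists m, barred_at s m.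

Lemma barred_at_mono s m m' : m <= m' -> barred_at s m -> barred_at s m'.
Proof.
move=> le_mm' bar_m s' size_s'.
rewrite -(cat_take_drop m s') catA; apply: D_ext; apply: bar_m.
by rewrite size_take size_s'; case: ltngtP le_mm'.
Qed.

Lemma barred_rcons s : (forall a, barred (rcons s a)) -> barred s.
Proof.
move=> bar_a.
have [M barM] : exists M, forall a, a \in enum Act -> barred_at (rcons s a) M.
  elim: (enum Act) => [|a l [M barM]]; first by exists 0.
  have [m bar_m] := bar_a a.
  exists (maxn m M) => b; rewrite inE => /orP [/eqP ->|bl].
    exact: barred_at_mono (leq_maxl _ _) bar_m.
  exact: barred_at_mono (leq_maxr _ _) (barM b bl).
exists M.+1; case=> [|a s'] //= [size_s'].
by rewrite -cat_rcons; apply: barM; rewrite ?mem_enum.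
Qed.

Lemma unbarred_path :
  ~ barred [::] -> exists t : itrace Act, forall n, ~ barred (iprefix t n).
Proof.
move=> unbar0.
have step s : ~ barred s -> exists a, ~ barred (rcons s a).
  by move=> unbar_s; apply: NNPP => none; apply/unbar_s/barred_rcons => a;
    apply: NNPP => unbar_a; apply: none; exists a.
have [a0 _] := step _ unbar0.
have next_ex s : exists a, ~ barred s -> ~ barred (rcons s a).
  by case: (classic (barred s)) => [bar_s|/step [a]]; [exists a0|exists a].
pose next s := proj1_sig (constructive_indefinite_description _ (next_ex s)).
have nextP s : ~ barred s -> ~ barred (rcons s (next s)).
  by rewrite /next; case: constructive_indefinite_description.
pose w n := iter n (fun s => rcons s (next s)) [::].
exists (fun i => next (w i)) => n.
have -> : iprefix (fun i => next (w i)) n = w n.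
  by elim: n => [|n IHn] //; rewrite iprefixS IHn.
by elim: n => [|n IHn] //=; apply: nextP.
Qed.

Theorem fan_theorem :
  (forall t : itrace Act, exists n, D (iprefix t n)) -> barred [::].
Proof.
move=> bar_t; apply: NNPP => /unbarred_path [t unbar_t].
have [n Dn] := bar_t t; apply: (unbar_t n); exists 0.
by case=> // _; rewrite cats0.
Qed.

End FanTheorem.

Theorem mainTheorem18 (Act : finType) (P : itrace Act -> Prop)
  (La Lr : seq Act -> Prop)
  (irrev_a : forall s s', La s -> La (s ++ s'))
  (irrev_r : forall s s', Lr s -> Lr (s ++ s'))
  (sound_r : forall t : itrace Act, (exists n, Lr (iprefix t n)) -> ~ P t)
  (sound_a : forall t : itrace Act, (exists n, La (iprefix t n)) -> P t)
  (compl_a : forall t : itrace Act, P t -> exists n, La (iprefix t n))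
  (compl_r : forall t : itrace Act, ~ P t -> exists n, Lr (iprefix t n)) :
  exists phi : rform Act, forall t : itrace Act, lsem phi t <-> P t.
Proof.
pose D s := La s \/ Lr s.
have D_ext s s' : D s -> D (s ++ s').
  by case=> [/irrev_a|/irrev_r]; [left|right].
have verdict t : exists n, D (iprefix t n).
  by case: (classic (P t)) => [/compl_a|/compl_r] [n]; exists n; [left|right].
have [N barN] := fan_theorem D_ext verdict.
exists (prefix_form N La) => t; rewrite lsem_prefix_form.
split=> [La_t|Pt]; first by apply: sound_a; exists N.
case: (barN (iprefix t N) (size_iprefix t N)) => // Lr_t.
by case: (sound_r t); first exists N.
Qed.
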